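(* Let $A=\{a_1,a_2,\dots,a_n\}\subseteq\mathbb{Z}_N$ be a $B_t[N;1]$ set. In the group $\mathbb{Z}_N \times \mathbb{Z}_{2t+1}$, let \[S\triangleq \{ (a_i,1) : a_i \in A\}.\] Then $\mathbb{Z}_N \times \mathbb{Z}_{2t+1} \ge \{-1,1\} \diamond_t S$.
   Context: A subset $A\subseteq\mathbb{Z}_N$ is a $B_t[N;1]$ set if the sums of any $t$ (not necessarily distinct) elements of $A$ are all different modulo $N$, i.e., distinct multisets of $t$ elements of $A$ have distinct sums in $\mathbb{Z}_N$. For a finite Abelian group $G$, a finite set $M\subseteq\mathbb{Z}\setminus\{0\}$ and $S=\{s_1,\dots,s_n\}\subseteq G$, we write $G\ge M\diamond_t S$ if the elements $\mathbf{e}\cdot(s_1,\dots,s_n)=\sum_i e_is_i$, over all $\mathbf{e}\in(M\cup\{0\})^n$ with $1\le\mathrm{wt}(\mathbf{e})\le t$, are all distinct and non-zero in $G$ (here $e_is_i$ is the $e_i$-fold group multiple, $\mathrm{wt}$ the Hamming weight). *)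

From HB Require Import structures.
From mathcomp Require Import all_boot all_order all_algebra.
Set Implicit Arguments. Unset Strict Implicit. Unset Printing Implicit Defensive.
Import GRing.Theory.
Local Open Scope ring_scope.

(* Z_N is modelled by 'I_(N.-1).+1 (for N >= 1), which carries MathComp's
   canonical additive group structure of integers mod N (zmodp). *)

(* A is a B_t[N;1] set in the finite abelian group G: distinct multisets of
   t elements of A (count functions supported on A with total multiplicity t)
   have distinct sums. *)
Definition Bt_set (G : finZmodType) (t : nat) (A : {set G}) : Prop :=
  forall m m' : {ffun G -> nat},
    (forall x, x \notin A -> m x = 0%N) ->
    (forall x, x \notin A -> m' x = 0%N) ->
    (\sum_x m x)%N = t -> (\sum_x m' x)%N = t ->
    m != m' ->
    \sum_x (x *+ m x) != \sum_x (x *+ m' x).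

Definition wt (n : nat) (e : {ffun 'I_n -> int}) : nat := #|[set i | e i != 0]|.

Definition dotv (G : zmodType) (n : nat) (e : {ffun 'I_n -> int}) (s : 'I_n -> G) : G :=
  \sum_i (s i *~ e i).

(* G >= M <>_t S : all e . S with e in (M u {0})^n, 1 <= wt e <= t are
   distinct and nonzero. *)
Definition diamond (G : zmodType) (M : seq int) (t n : nat) (s : 'I_n -> G) : Prop :=
  forall e e' : {ffun 'I_n -> int},
    (forall i, (e i \in M) || (e i == 0)) ->
    (forall i, (e' i \in M) || (e' i == 0)) ->
    (1 <= wt e <= t)%N -> (1 <= wt e' <= t)%N ->
    dotv e s != 0 /\ (e != e' -> dotv e s != dotv e' s).

From HB Require Import structures.
From mathcomp Require Import all_boot all_order all_algebra.
Import GRing.Theory Num.Theory Order.TTheory.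
Set Implicit Arguments. Unset Strict Implicit. Unset Printing Implicit Defensive.
Local Open Scope ring_scope.

(* If e.S = e'.S, put d = e - e'; then ||d||_1 <= wt e + wt e' <= 2t.  The
   second coordinate gives sum_i d_i = 0 mod 2t+1, hence sum_i d_i = 0 since
   |sum_i d_i| <= 2t.  Splitting d = p - q into its positive and negative
   parts yields two distinct multisets p, q on A of the same size
   (sum p + sum q <= 2t, so each has size <= t) and, by the first coordinate,
   the same sum; padding both with copies of one element gives a collision
   among t-multisets, contradicting the B_t property.  The nonzero claim is
   the case e' = 0. *)

Lemma wt_eq0 n (e : {ffun 'I_n -> int}) : (wt e == 0%N) = (e == 0).
Proof.
rewrite /wt cards_eq0; apply/eqP/eqP => [e0 | ->].
  by apply/ffunP => i; apply/eqP; move/setP/(_ i): e0; rewrite !inE ffunE => /negbFE.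
by apply/setP => i; rewrite !inE ffunE eqxx.
Qed.

Lemma wt_unit_entries n (e : {ffun 'I_n -> int}) :
  (forall i, `|e i| <= 1) -> wt e = (\sum_i `|e i|)%N.
Proof.
move=> e_le1; rewrite /wt -sum1_card big_mkcond /=.
apply: eq_bigr => i _; rewrite inE; have := e_le1 i.
case: (e i) => [[|[|k]]|k] //=.
by rewrite NegzE normrN lez_nat; case: k.
Qed.

Lemma dotv0 (G : zmodType) n (s : 'I_n -> G) : dotv 0 s = 0.
Proof. by apply: big1 => i _; rewrite ffunE mulr0z. Qed.

Lemma dotv_pair (U V : zmodType) n (e : {ffun 'I_n -> int}) (a : 'I_n -> U) (b : V) :
  dotv e (fun i => (a i, b)) = (\sum_i a i *~ e i, b *~ \sum_i e i).
Proof.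
rewrite /dotv mulrz_sumr [LHS]surjective_pairing.
rewrite (raddf_sum (@fst U V)) (raddf_sum (@snd U V)).
by congr (_, _); apply: eq_bigr => i _; rewrite raddfMz.
Qed.

Lemma Zp1_mulrn_eq0 k m : (m <= k)%N -> (Zp1 *+ m == 0 :> 'I_k.+1) = (m == 0%N).
Proof.
move=> le_mk; apply/eqP/eqP => [/(congr1 val) | ->]; last by rewrite mulr0n.
case: k le_mk => [|k] le_mk; first by move: le_mk; rewrite leqn0 => /eqP.
by rewrite Zp_mulrn /= modn_small ?mul1n // ltnS.
Qed.

Lemma Zp1_mulz_eq0 k (z : int) : (`|z| <= k)%N -> Zp1 *~ z = 0 :> 'I_k.+1 -> z = 0.
Proof.
case: z => m le_mk /eqP; first by rewrite -pmulrn Zp1_mulrn_eq0 // => /eqP ->.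
by rewrite NegzE mulrNz oppr_eq0 -pmulrn Zp1_mulrn_eq0.
Qed.

Section BtSet.

Variables (G : finZmodType) (t : nat) (A : {set G}) (n : nat) (a : 'I_n -> G).
Hypotheses (BtA : Bt_set t A) (a_inj : injective a) (a_in : forall i, a i \in A).

Definition multiset_of (f : 'I_n -> nat) : {ffun G -> nat} :=
  [ffun x => (\sum_(i | a i == x) f i)%N].

Lemma multiset_of_size f : (\sum_x multiset_of f x)%N = (\sum_i f i)%N.
Proof.
rewrite [RHS](partition_big a predT) //=.
by apply: eq_bigr => x _; rewrite ffunE.
Qed.

Lemma multiset_of_sum f : \sum_x x *+ multiset_of f x = \sum_i a i *+ f i.
Proof.
rewrite [RHS](partition_big a predT) //=.
apply: eq_bigr => x _; rewrite ffunE -sumrMnr.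
by apply: eq_bigr => i /eqP ->.
Qed.

Lemma multiset_of_at f i : multiset_of f (a i) = f i.
Proof. by rewrite ffunE (big_pred1 i) // => j /=; rewrite (inj_eq a_inj). Qed.

Lemma multiset_of_out f x : x \notin A -> multiset_of f x = 0%N.
Proof.
move=> xNA; rewrite ffunE big_pred0 // => i /=.
by apply: contraNF xNA => /eqP <-.
Qed.

Lemma Bt_sum_neq (f g : 'I_n -> nat) i0 :
  (\sum_i f i)%N = t -> (\sum_i g i)%N = t -> f i0 != g i0 ->
  \sum_i a i *+ f i != \sum_i a i *+ g i.
Proof.
move=> size_f size_g ne_fg; rewrite -!multiset_of_sum.
apply: BtA; rewrite ?multiset_of_size //; try exact: multiset_of_out.
by apply: contra_neq ne_fg => eq_fg; rewrite -!(multiset_of_at _ i0) eq_fg.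
Qed.

(* Pad both multisets with t - |f| copies of a i0. *)
Lemma Bt_sum_neq_le (f g : 'I_n -> nat) i0 :
  (\sum_i f i)%N = (\sum_i g i)%N -> (\sum_i f i <= t)%N -> f i0 != g i0 ->
  \sum_i a i *+ f i != \sum_i a i *+ g i.
Proof.
move=> size_fg size_f_le ne_fg.
pose c := (t - \sum_i f i)%N.
have delta_size : (\sum_i (i == i0) * c = c)%N.
  by rewrite (bigD1 i0) //= eqxx mul1n big1 ?addn0 // => j /negbTE ->.
have delta_sum : \sum_i a i *+ ((i == i0) * c) = a i0 *+ c.
  by rewrite (bigD1 i0) //= eqxx mul1n big1 ?addr0 // => j /negbTE ->.
pose pad (h : 'I_n -> nat) i := (h i + (i == i0) * c)%N.
have size_pad h : (\sum_i pad h i = \sum_i h i + c)%N.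
  by rewrite big_split /= delta_size.
have sum_pad h : \sum_i a i *+ pad h i = \sum_i a i *+ h i + a i0 *+ c.
  by under eq_bigr do rewrite mulrnDr; rewrite big_split /= delta_sum.
have := @Bt_sum_neq (pad f) (pad g) i0.
rewrite !size_pad -size_fg subnKC // !sum_pad /pad eqxx mul1n eqn_add2r.
by move=> /(_ erefl erefl ne_fg); apply: contra => /eqP ->.
Qed.

Lemma Bt_relation_neq0 (d : 'I_n -> int) i0 :
  d i0 != 0 -> \sum_i d i = 0 -> (\sum_i `|d i| <= t.*2)%N ->
  \sum_i a i *~ d i != 0.
Proof.
move=> d_i0 sum_d0 norm_d_le.
pose p i := if 0 <= d i then `|d i|%N else 0%N.
pose q i := if 0 <= d i then 0%N else `|d i|%N.
have sub_pq i : (p i)%:Z - (q i)%:Z = d i.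
  rewrite /p /q; case: ifPn => [d_ge0 | d_lt0]; first by rewrite subr0 gez0_abs.
  by rewrite sub0r ltz0_abs ?opprK // ltNge.
have add_pq i : (p i + q i)%N = `|d i|%N by rewrite /p /q; case: ifP; rewrite ?addn0.
have sum_pq : (\sum_i p i = \sum_i q i)%N.
  apply/eqP; rewrite -eqz_nat !(big_morph Posz PoszD (erefl _)) -subr_eq0 -sumrB.
  by under eq_bigr do rewrite sub_pq; rewrite sum_d0.
have size_p_le : (\sum_i p i <= t)%N.
  move: norm_d_le; under eq_bigr do rewrite -add_pq.
  by rewrite big_split /= -sum_pq addnn leq_double.
have ne_pq : p i0 != q i0 by apply: contra_neq d_i0 => eq_pq; rewrite -sub_pq eq_pq subrr.
apply: contra (Bt_sum_neq_le sum_pq size_p_le ne_pq) => /eqP rel.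
rewrite -subr_eq0 -sumrB -[X in _ == X]rel; apply/eqP/eq_bigr => i _.
by rewrite !pmulrn -mulrzBr sub_pq.
Qed.

Let s i : G * 'I_(t.*2).+1 := (a i, Zp1).

Lemma dotv_neq (e e' : {ffun 'I_n -> int}) :
  (forall i, `|e i| <= 1) -> (forall i, `|e' i| <= 1) ->
  (wt e <= t)%N -> (wt e' <= t)%N -> e != e' -> dotv e s != dotv e' s.
Proof.
move=> e_le1 e'_le1 wt_e_le wt_e'_le ne_ee'.
have /existsP[i0 ne_i0] : [exists i, e i != e' i].
  by apply: contraNT ne_ee' => /existsPn eq_ee'; apply/eqP/ffunP => i; apply/eqP/negPn.
pose d i := e i - e' i.
have norm_d_le : (\sum_i `|d i| <= t.*2)%N.
  apply: (@leq_trans (wt e + wt e')); last by rewrite -addnn leq_add.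
  rewrite (wt_unit_entries e_le1) (wt_unit_entries e'_le1) -big_split /=.
  by apply: leq_sum => i _; have := leqD_dist (e i) 0 (e' i); rewrite subr0 sub0r abszN.
rewrite !dotv_pair; apply/negP => /eqP[eq_fst eq_snd].
have sum_d0 : \sum_i d i = 0.
  apply: (@Zp1_mulz_eq0 t.*2); last by rewrite sumrB mulrzBr eq_snd subrr.
  apply: leq_trans norm_d_le; rewrite -lez_nat (big_morph Posz PoszD (erefl _)).
  rewrite abszE; apply: le_trans (ler_norm_sum _ _ _) _.
  by apply: ler_sum => i _; rewrite abszE.
have d_i0 : d i0 != 0 by rewrite subr_eq0.
have := Bt_relation_neq0 d_i0 sum_d0 norm_d_le.
by rewrite /d; under eq_bigr do rewrite mulrzBr; rewrite sumrB eq_fst subrr eqxx.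
Qed.

Lemma diamond_pair : diamond [:: -1; 1] t s.
Proof.
have le1 (e : {ffun 'I_n -> int}) : (forall i, (e i \in [:: -1; 1]) || (e i == 0)) ->
    forall i, `|e i| <= 1.
  by move=> e_in i; move: (e_in i); rewrite !inE -orbA => /or3P[] /eqP ->.
move=> e e' e_in e'_in /andP[wt_e_gt0 wt_e_le] /andP[_ wt_e'_le]; split.
  rewrite -(dotv0 s); apply: dotv_neq.
  - exact: le1.
  - by move=> i; rewrite ffunE.
  - exact: wt_e_le.
  - by apply: leq_trans (leq0n t); rewrite leqn0 wt_eq0.
  - by rewrite -wt_eq0 -lt0n.
exact: dotv_neq (le1 _ e_in) (le1 _ e'_in) wt_e_le wt_e'_le.
Qed.

End BtSet.

Theorem theorem9 (N t : nat) (hN : (0 < N)%N) (A : {set 'I_(N.-1).+1}) :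
  Bt_set t A ->
  diamond [:: -1; 1] t
    (fun i : 'I_#|A| =>
       ((@enum_val _ (mem A) i, Zp1) : 'I_(N.-1).+1 * 'I_(t.*2).+1)).
Proof.
move=> BtA; have := diamond_pair BtA (@enum_val_inj _ A) (@enum_valP _ A).
exact.
Qed.
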